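(* Let $R$ be a finite Frobenius ring, $\chi,\chi'$ generating characters of $R$, $M=\{x_0=0,x_1,\ldots,x_n\}$ a finite $R$-bimodule, and $B$ a non-degenerate bilinear form on $M$. Then $H=[\chi(B(x_i,x_j))]_{0\le i,j\le n}$ and $H'=[\chi'(B(x_i,x_j))]_{0\le i,j\le n}$ are equivalent by a row permutation, i.e. $H'$ is obtained from $H$ by permuting its rows.
   Context: A bilinear form on $M$ is a biadditive map $B:M\times M\to R$ with $B(rx,y)=rB(x,y)$ and $B(x,yr)=B(x,y)r$; it is non-degenerate if its left and right kernels are zero. A character of $R$ is a group homomorphism $(R,+)\to\mathbb{C}^*$; it is generating if its kernel contains no nonzero left ideal and no nonzero right ideal of $R$. *)

From HB Require Import structures.
From mathcomp Require Import all_boot all_order all_algebra all_fingroup all_field.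
Set Implicit Arguments. Unset Strict Implicit. Unset Printing Implicit Defensive.
Import GRing.Theory Num.Theory.
Local Open Scope ring_scope.

Definition is_left_ideal (R : finNzRingType) (I : {set R}) : Prop :=
  0 \in I /\ (forall x y, x \in I -> y \in I -> x + y \in I) /\
  (forall x, x \in I -> - x \in I) /\ (forall r x, x \in I -> r * x \in I).

Definition is_right_ideal (R : finNzRingType) (I : {set R}) : Prop :=
  0 \in I /\ (forall x y, x \in I -> y \in I -> x + y \in I) /\
  (forall x, x \in I -> - x \in I) /\ (forall r x, x \in I -> x * r \in I).

(* A character of R: a group homomorphism (R,+) -> C^*  (C modelled by algC;
   the values of a character of a finite group are roots of unity, hence in algC). *)
Definition is_character (R : finNzRingType) (chi : R -> algC) : Prop :=
  (forall x, chi x != 0) /\ (forall x y, chi (x + y) = chi x * chi y).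

Definition char_kernel (R : finNzRingType) (chi : R -> algC) : {set R} :=
  [set x | chi x == 1].

Definition generating_character (R : finNzRingType) (chi : R -> algC) : Prop :=
  is_character chi /\
  (forall I : {set R}, is_left_ideal I -> I \subset char_kernel chi -> I = [set 0]) /\
  (forall I : {set R}, is_right_ideal I -> I \subset char_kernel chi -> I = [set 0]).

(* Finite Frobenius ring: by Wood's theorem, a finite ring is Frobenius iff it
   admits a generating character. *)
Definition frobenius_ring (R : finNzRingType) : Prop :=
  exists chi : R -> algC, generating_character chi.

Definition is_bimodule (R : finNzRingType) (M : finZmodType)
    (lact : R -> M -> M) (ract : M -> R -> M) : Prop :=
  (forall r x y, lact r (x + y) = lact r x + lact r y) /\
  (forall r s x, lact (r + s) x = lact r x + lact s x) /\
  (forall r s x, lact (r * s) x = lact r (lact s x)) /\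
  (forall x, lact 1 x = x) /\
  (forall r x y, ract (x + y) r = ract x r + ract y r) /\
  (forall r s x, ract x (r + s) = ract x r + ract x s) /\
  (forall r s x, ract x (r * s) = ract (ract x r) s) /\
  (forall x, ract x 1 = x) /\
  (forall r s x, ract (lact r x) s = lact r (ract x s)).

Definition is_bilinear_form (R : finNzRingType) (M : finZmodType)
    (lact : R -> M -> M) (ract : M -> R -> M) (B : M -> M -> R) : Prop :=
  [/\ forall x y z, B (x + y) z = B x z + B y z,
      forall x y z, B x (y + z) = B x y + B x z,
      forall r x y, B (lact r x) y = r * B x y
    & forall r x y, B x (ract y r) = B x y * r].

Definition non_degenerate (R : finNzRingType) (M : finZmodType) (B : M -> M -> R) : Prop :=
  (forall x, (forall y, B x y = 0) -> x = 0) /\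
  (forall y, (forall x, B x y = 0) -> y = 0).

Definition char_form_matrix (R : finNzRingType) (M : finZmodType) (n : nat)
    (chi : R -> algC) (B : M -> M -> R) (e : 'I_n.+1 -> M) : 'M[algC]_n.+1 :=
  \matrix_(i, j) chi (B (e i) (e j)).

From HB Require Import structures.
From mathcomp Require Import all_boot all_order all_algebra all_fingroup all_field.
Set Implicit Arguments. Unset Strict Implicit. Unset Printing Implicit Defensive.
Local Open Scope ring_scope.
Import GRing.Theory Num.Theory.

(* Since a generating character vanishes on no nonzero one-sided ideal, and
   the images of B(z, _) and B(_, y) are a right and a left ideal, the map
   z |-> chi(B(z, _)) is injective from M into the characters of (M, +), and
   sum_z chi(B(z, y)) = 0 for y <> 0.  The latter shows that the sum over z of
   the inner products <chi'(B(x, _)), chi(B(z, _))> is |M| <> 0, so by the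
   orthogonality of characters every row chi'(B(x, _)) of H' is a row
   chi(B(z, _)) of H; injectivity of x |-> chi'(B(x, _)) makes x |-> z a
   permutation. *)

Lemma morph_add0 (U V : zmodType) (f : U -> V) :
  {morph f : x y / x + y} -> f 0 = 0.
Proof. by move=> fD; apply: (addrI (f 0)); rewrite -fD !addr0. Qed.

Lemma morph_addN (U V : zmodType) (f : U -> V) :
  {morph f : x y / x + y} -> {morph f : x / - x}.
Proof.
by move=> fD x; apply: (addrI (f x)); rewrite -fD !subrr (morph_add0 fD).
Qed.

Section AdditiveCharacters.
Variables (M : finZmodType) (F : idomainType).

Lemma char0 (psi : M -> F) :
  {morph psi : a b / a + b >-> a * b} -> psi 0 != 0 -> psi 0 = 1.
Proof.
by move=> psiD psi0_neq0; apply: (mulIf psi0_neq0); rewrite mul1r -psiD addr0.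
Qed.

Lemma char_sum_eq0 (psi : M -> F) (a : M) :
  {morph psi : a b / a + b >-> a * b} -> psi a != 1 -> \sum_y psi y = 0.
Proof.
move=> psiD psia_neq1.
have sum_psi : \sum_y psi y = psi a * \sum_y psi y.
  rewrite mulr_sumr (reindex_inj (addrI a)) /=.
  by apply: eq_bigr => y _; rewrite psiD.
have /eqP : (1 - psi a) * \sum_y psi y = 0 by rewrite mulrBl mul1r -sum_psi subrr.
by rewrite mulf_eq0 subr_eq0 eq_sym (negbTE psia_neq1) => /eqP.
Qed.

Lemma char_orthogonal (psi phi : M -> F) (a : M) :
  {morph psi : a b / a + b >-> a * b} -> {morph phi : a b / a + b >-> a * b} ->
  phi 0 = 1 -> psi a != phi a -> \sum_y psi y * phi (- y) = 0.
Proof.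
move=> psiD phiD phi0 psia_neq; apply: (char_sum_eq0 (a := a)).
  by move=> y z; rewrite opprD psiD phiD mulrACA.
apply: contra psia_neq => /eqP psi_phiN_a.
by rewrite -[psi a]mulr1 -phi0 -(addNr a) phiD mulrA psi_phiN_a mul1r.
Qed.

End AdditiveCharacters.

Lemma character0 (R : finNzRingType) (chi : R -> algC) :
  is_character chi -> chi 0 = 1.
Proof. by case=> chi_neq0 chiD; exact: char0. Qed.

Section CharactersOfForm.
Variables (R : finNzRingType) (M : finZmodType).
Variables (lact : R -> M -> M) (ract : M -> R -> M) (B : M -> M -> R).
Hypothesis bilB : is_bilinear_form lact ract B.
Hypothesis ndB : non_degenerate B.

Let BDl y : {morph B^~ y : x z / x + z}.
Proof. by case: bilB => BDl _ _ _ x z; apply: BDl. Qed.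

Let BDr x : {morph B x : y z / y + z}.
Proof. by case: bilB => _ BDr _ _ y z; apply: BDr. Qed.

Lemma right_ideal_rowB x : is_right_ideal [set B x y | y : M].
Proof.
have [_ _ _ BrZ] := bilB.
split; first by apply/imsetP; exists 0; rewrite ?(morph_add0 (BDr x)).
split.
  move=> _ _ /imsetP[y _ ->] /imsetP[z _ ->].
  by apply/imsetP; exists (y + z); rewrite ?BDr.
split.
  move=> _ /imsetP[y _ ->].
  by apply/imsetP; exists (- y); rewrite ?(morph_addN (BDr x)).
by move=> r _ /imsetP[y _ ->]; apply/imsetP; exists (ract y r); rewrite ?BrZ.
Qed.

Lemma left_ideal_colB y : is_left_ideal [set B x y | x : M].
Proof.
have [_ _ BlZ _] := bilB.
split; first by apply/imsetP; exists 0; rewrite ?(morph_add0 (BDl y)).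
split.
  move=> _ _ /imsetP[x _ ->] /imsetP[z _ ->].
  by apply/imsetP; exists (x + z); rewrite ?BDl.
split.
  move=> _ /imsetP[x _ ->].
  by apply/imsetP; exists (- x); rewrite ?(morph_addN (BDl y)).
by move=> r _ /imsetP[x _ ->]; apply/imsetP; exists (lact r x); rewrite ?BlZ.
Qed.

Variable chi : R -> algC.
Hypothesis gen_chi : generating_character chi.

Let chiD : {morph chi : a b / a + b >-> a * b}.
Proof. by case: gen_chi => -[]. Qed.

Let chi0 : chi 0 = 1.
Proof. by apply: character0; case: gen_chi. Qed.

Lemma generating_rowB_eq1 x : (forall y, chi (B x y) = 1) -> x = 0.
Proof.
move=> chiBx1; have [_ [_ gen_r]] := gen_chi.
have rowB0 : [set B x y | y : M] = [set 0].
  apply: gen_r (right_ideal_rowB x) _.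
  by apply/subsetP => _ /imsetP[y _ ->]; rewrite inE chiBx1.
have [nd_l _] := ndB; apply: nd_l => y.
by apply/set1P; rewrite -rowB0 imset_f.
Qed.

Lemma generating_colB_eq1 y : (forall x, chi (B x y) = 1) -> y = 0.
Proof.
move=> chiBy1; have [_ [gen_l _]] := gen_chi.
have colB0 : [set B x y | x : M] = [set 0].
  apply: gen_l (left_ideal_colB y) _.
  by apply/subsetP => _ /imsetP[x _ ->]; rewrite inE chiBy1.
have [_ nd_r] := ndB; apply: nd_r => x.
by apply/set1P; rewrite -colB0 imset_f.
Qed.

Lemma chiB_row_inj x z : (forall y, chi (B x y) = chi (B z y)) -> x = z.
Proof.
move=> eq_rows; apply/eqP; rewrite -subr_eq0; apply/eqP.
apply: generating_rowB_eq1 => y.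
by rewrite BDl (morph_addN (BDl y)) chiD eq_rows -chiD subrr.
Qed.

Lemma sum_chiB_col y : y != 0 -> \sum_x chi (B x y) = 0.
Proof.
move=> y_neq0.
have /existsP[a chiBa_neq1] : [exists a, chi (B a y) != 1].
  apply: contraNT y_neq0 => /existsPn chiB1; apply/eqP.
  by apply: generating_colB_eq1 => x; apply/eqP/negPn/chiB1.
by apply: (char_sum_eq0 (a := a)) chiBa_neq1 => x z; rewrite BDl chiD.
Qed.

Lemma chiB_row_exists (chi' : R -> algC) x : generating_character chi' ->
  exists z, forall y, chi' (B x y) = chi (B z y).
Proof.
move=> gen_chi'; have [[_ chi'D] _] := gen_chi'.
have B0r z : B z 0 = 0 by apply: morph_add0 (BDr z).
suff /existsP[z /forallP eq_z] : [exists z, [forall y, chi' (B x y) == chi (B z y)]].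
  by exists z => y; apply/eqP.
apply: contraT => /existsPn rows_neq.
have chi'0 : chi' 0 = 1 by apply: character0; case: gen_chi'.
have orth z : \sum_y chi' (B x y) * chi (B z (- y)) = 0.
  have /forallPn[a neq_a] := rows_neq z.
  apply: (@char_orthogonal _ _ (chi' \o B x) (chi \o B z) a) neq_a.
  - by move=> y y'; rewrite /= BDr chi'D.
  - by move=> y y'; rewrite /= BDr chiD.
  - by rewrite /= B0r chi0.
have : \sum_z \sum_y chi' (B x y) * chi (B z (- y)) = #|M|%:R.
  rewrite exchange_big (bigD1 0) //= [X in _ + X]big1 => [|y y_neq0]; last first.
    by rewrite -mulr_sumr sum_chiB_col ?oppr_eq0 ?mulr0.
  rewrite addr0 oppr0 B0r chi'0.
  under eq_bigr do rewrite B0r chi0 mulr1.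
  by rewrite sumr_const.
have M_gt0 : (0 < #|M|)%N by apply/card_gt0P; exists 0.
by rewrite big1 // => /esym/eqP; rewrite pnatr_eq0 eqn0Ngt M_gt0.
Qed.

End CharactersOfForm.

Theorem propositionA4 (R : finNzRingType) (M : finZmodType)
    (lact : R -> M -> M) (ract : M -> R -> M) (B : M -> M -> R)
    (chi chi' : R -> algC) (n : nat) (e : 'I_n.+1 -> M) :
  frobenius_ring R ->
  generating_character chi -> generating_character chi' ->
  is_bimodule lact ract ->
  is_bilinear_form lact ract B -> non_degenerate B ->
  bijective e -> e ord0 = 0 ->
  exists s : 'S_n.+1,
    char_form_matrix chi' B e = row_perm s (char_form_matrix chi B e).
Proof.
move=> _ gen_chi gen_chi' _ bilB ndB [e_inv eK e_invK] _.
have row_of i : exists k, forall y, chi' (B (e i) y) = chi (B (e k) y).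
  have [z eq_z] := chiB_row_exists bilB ndB gen_chi (e i) gen_chi'.
  by exists (e_inv z) => y; rewrite e_invK.
have [g gP] := fin_all_exists row_of.
have g_inj : injective g.
  move=> i j gij; apply: (can_inj eK).
  by apply: (chiB_row_inj bilB ndB gen_chi') => y; rewrite !gP gij.
by exists (perm g_inj); apply/matrixP => i j; rewrite !mxE permE gP.
Qed.
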